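(* Let $p_\tau(\mathbf x)=\sum_{k=1}^K w_k\mathcal N(\mathbf x;\boldsymbol\mu_k,\sigma_\tau^2I_d)$ with $w_k>0$, $\sum w_k=1$, and let $\mathbf J(\mathbf x,\tau)=\nabla\nabla\log p_\tau(\mathbf x)$ be the score Jacobian. Let $\bar{\mathbf x}=\sum_kw_k\boldsymbol\mu_k$, $\boldsymbol\nu_k=\boldsymbol\mu_k-\bar{\mathbf x}$, $\mathbf W=\sum_kw_k\boldsymbol\nu_k\boldsymbol\nu_k^\top$, $\mathbf Q=\sum_kw_k|\boldsymbol\nu_k|^2\boldsymbol\nu_k\boldsymbol\nu_k^\top$ and $\langle d^2\rangle=\sum_kw_k|\boldsymbol\nu_k|^2$. Then as $\sigma_\tau^2\to\infty$, $$\mathbf J(\bar{\mathbf x},\tau)=-\frac{I}{\sigma_\tau^2}+\frac{\mathbf W}{\sigma_\tau^4}+\frac{\langle d^2\rangle\mathbf W-\mathbf Q}{2\sigma_\tau^6}+O(\sigma_\tau^{-8}).$$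
   Context: $\mathcal N(\mathbf x;\boldsymbol\mu,\Sigma)$ is the Gaussian density; $\mathbf W$ is the between-class covariance and $\mathbf Q$ the distance-weighted covariance. *)

From HB Require Import structures.
From mathcomp Require Import all_boot all_order all_algebra.
From mathcomp Require Import all_classical all_reals all_analysis.
Set Implicit Arguments. Unset Strict Implicit. Unset Printing Implicit Defensive.
Import Order.TTheory GRing.Theory Num.Theory.
Import numFieldNormedType.Exports.
Local Open Scope ring_scope.

Section Defs.
Variables (R : realType) (d K : nat).

Definition sqnorm (v : 'rV[R]_d) : R := \sum_(i < d) (v 0 i) ^+ 2.

Definition gauss (x mu : 'rV[R]_d) (s2 : R) : R :=
  powR (2 * pi * s2) (- (d%:R) / 2) * expR (- sqnorm (x - mu) / (2 * s2)).

Definition mixture (w : 'I_K -> R) (mu : 'I_K -> 'rV[R]_d) (s2 : R)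
  (x : 'rV[R]_d) : R := \sum_(k < K) w k * gauss x (mu k) s2.

Definition ebase (i : 'I_d) : 'rV[R]_d := delta_mx 0 i.

Definition hessian (f : 'rV[R]_d -> R) (x : 'rV[R]_d) : 'M[R]_d :=
  \matrix_(i, j) 'D_(ebase j) (fun y => 'D_(ebase i) f y) x.

Definition score_jacobian (w : 'I_K -> R) (mu : 'I_K -> 'rV[R]_d) (s2 : R)
  (x : 'rV[R]_d) : 'M[R]_d := hessian (fun y => ln (mixture w mu s2 y)) x.

Definition xbar (w : 'I_K -> R) (mu : 'I_K -> 'rV[R]_d) : 'rV[R]_d :=
  \sum_(k < K) w k *: mu k.

Definition nu (w : 'I_K -> R) (mu : 'I_K -> 'rV[R]_d) (k : 'I_K) : 'rV[R]_d :=
  mu k - xbar w mu.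

Definition Wcov (w : 'I_K -> R) (mu : 'I_K -> 'rV[R]_d) : 'M[R]_d :=
  \sum_(k < K) w k *: ((nu w mu k)^T *m nu w mu k).

Definition Qcov (w : 'I_K -> R) (mu : 'I_K -> 'rV[R]_d) : 'M[R]_d :=
  \sum_(k < K) (w k * sqnorm (nu w mu k)) *: ((nu w mu k)^T *m nu w mu k).

Definition avg_d2 (w : 'I_K -> R) (mu : 'I_K -> 'rV[R]_d) : R :=
  \sum_(k < K) w k * sqnorm (nu w mu k).

End Defs.

From HB Require Import structures.
From mathcomp Require Import all_boot all_order all_algebra.
From mathcomp Require Import all_classical all_reals all_analysis.
From mathcomp Require Import ring lra.
Set Implicit Arguments. Unset Strict Implicit. Unset Printing Implicit Defensive.
Import Order.TTheory GRing.Theory Num.Theory.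
Import numFieldNormedType.Exports.
Local Open Scope ring_scope.

(* Differentiating log p twice gives the score Jacobian at any point x as
   (sum_k w_k g_k (mu_k - x)(mu_k - x)^T) / (s^2 p) - I/s - m m^T / (s p)^2, with
   g_k the Gaussian factors and m = sum_k w_k g_k (mu_k - x).  At x = xbar the
   normalising constant cancels and g_k may be replaced by E_k = exp(-|nu_k|^2/(2s)),
   so J = (P/S - M M^T / S^2) / s^2 - I/s with S = sum w_k E_k,
   P = sum w_k E_k nu_k nu_k^T and M = sum w_k E_k nu_k.
   Since E_k = 1 - |nu_k|^2/(2s) + O(s^-2), we get S = 1 - <d^2>/(2s) + O(s^-2),
   P = W - Q/(2s) + O(s^-2), and M = O(1/s) because sum_k w_k nu_k = 0; expanding
   the quotient gives P/S - M M^T/S^2 = W + (<d^2> W - Q)/(2s) + O(s^-2). *)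

Section BigOInv.
Variable R : realType.
Implicit Types (f g : R -> R) (a c x : R).

(* f s = O(s^-n) as s -> +oo; the normalisations C >= 0 and M >= 1 are harmless
   and make products and weakening immediate. *)
Definition bigOinv n f :=
  exists C M, 0 <= C /\ 1 <= M /\ forall s, M < s -> `|f s| <= C / s ^+ n.

Lemma eq_bigOinv n f g :
  (exists M0, forall s, M0 < s -> f s = g s) -> bigOinv n g -> bigOinv n f.
Proof.
move=> [M0 fg] [C [M [C0 [M1 gO]]]]; exists C, (Num.max M M0).
split=> //; split; first by rewrite le_max M1.
by move=> s; rewrite gt_max => /andP[sM sM0]; rewrite fg // gO.
Qed.

Lemma bigOinv_cst c : bigOinv 0 (fun=> c).
Proof. by exists `|c|, 1; do 2!split=> //; move=> s _; rewrite expr0 divr1. Qed.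

Lemma bigOinv_invX n : bigOinv n (fun s => (s ^+ n)^-1).
Proof.
exists 1, 1; do 2!split=> //; move=> s s1; rewrite div1r ger0_norm // invr_ge0.
by rewrite exprn_ge0 //; lra.
Qed.

Lemma bigOinvN n f : bigOinv n f -> bigOinv n (fun s => - f s).
Proof.
move=> [C [M [C0 [M1 fO]]]]; exists C, M; do 2!split=> //.
by move=> s /fO; rewrite normrN.
Qed.

Lemma bigOinvD n f g : bigOinv n f -> bigOinv n g -> bigOinv n (fun s => f s + g s).
Proof.
move=> [C1 [M1 [C10 [M11 fO]]]] [C2 [M2 [C20 [M21 gO]]]].
exists (C1 + C2), (Num.max M1 M2); do !split; first exact: addr_ge0.
  by rewrite le_max M11.
move=> s; rewrite gt_max => /andP[sM1 sM2].
by rewrite (le_trans (ler_normD _ _)) // mulrDl lerD ?fO ?gO.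
Qed.

Lemma bigOinvB n f g : bigOinv n f -> bigOinv n g -> bigOinv n (fun s => f s - g s).
Proof. by move=> fO /bigOinvN; apply: bigOinvD. Qed.

Lemma bigOinvM m n f g :
  bigOinv m f -> bigOinv n g -> bigOinv (m + n) (fun s => f s * g s).
Proof.
move=> [C1 [M1 [C10 [M11 fO]]]] [C2 [M2 [C20 [M21 gO]]]].
exists (C1 * C2), (Num.max M1 M2); do !split; first exact: mulr_ge0.
  by rewrite le_max M11.
move=> s; rewrite gt_max => /andP[sM1 sM2].
rewrite normrM exprD invfM mulrACA.
by apply: ler_pM; rewrite ?normr_ge0 ?fO ?gO.
Qed.

Lemma bigOinvW m n f : (m <= n)%N -> bigOinv n f -> bigOinv m f.
Proof.
move=> mn [C [M [C0 [M1 fO]]]]; exists C, M; do 2!split=> //; move=> s sM.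
have s1 : 1 < s by lra.
apply: (le_trans (fO s sM)); apply: ler_wpM2l => //.
by rewrite lef_pV2 ?posrE ?exprn_gt0 ?ler_eXn2l //; lra.
Qed.

Lemma bigOinvZ n c f : bigOinv n f -> bigOinv n (fun s => c * f s).
Proof. by rewrite -[n]add0n; apply: bigOinvM; apply: bigOinv_cst. Qed.

Lemma bigOinv_sum n (I : finType) (F : I -> R -> R) :
  (forall i, bigOinv n (F i)) -> bigOinv n (fun s => \sum_i F i s).
Proof.
move=> FO; apply: (@eq_bigOinv _ _ (\sum_i F i)).
  by exists 0 => s _; rewrite fct_sumE.
apply: (big_ind (bigOinv n)) => // [|f g]; last exact: bigOinvD.
by exists 0, 1; do 2!split=> //; move=> s _; rewrite normr0 mul0r.
Qed.

Lemma eventually_ge_half f : bigOinv 1 (fun s => f s - 1) ->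
  exists M, forall s, M < s -> 1 / 2 <= f s.
Proof.
move=> [C [M [C0 [M1 fO]]]]; exists (Num.max M (2 * C)) => s.
rewrite gt_max => /andP[sM sC]; have s0 : 0 < s by lra.
have : C / s <= 1 / 2 by rewrite ler_pdivrMr //; lra.
by move: (fO s sM); rewrite expr1 ler_norml => /andP[lo _]; lra.
Qed.

Lemma bigOinvV f : (exists M, forall s, M < s -> 1 / 2 <= f s) ->
  bigOinv 0 (fun s => (f s)^-1).
Proof.
move=> [M fM]; exists 2, (Num.max 1 M); do 2!split=> //; first by rewrite le_max lexx.
move=> s; rewrite gt_max => /andP[_ /fM f0].
rewrite expr0 divr1 ger0_norm ?invr_ge0; last lra.
by rewrite -[2]invrK lef_pV2 ?posrE; lra.
Qed.

Lemma bigOinv_uniform (I : finType) n (F : I -> R -> R) :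
  (forall i, bigOinv n (F i)) ->
  exists C M, forall s, M < s -> forall i, `|F i s| <= C / s ^+ n.
Proof.
move=> FO; have /boolp.choice[CM CMO] : forall i, exists CM : R * R, 0 <= CM.1 /\ 1 <= CM.2 /\
    forall s, CM.2 < s -> `|F i s| <= CM.1 / s ^+ n.
  by move=> i; have [C [M iO]] := FO i; exists (C, M).
have le_sum (G : I -> R) i : (forall j, 0 <= G j) -> G i <= \sum_j G j.
  by move=> G0; rewrite (bigD1 i) //= lerDl sumr_ge0.
exists (\sum_i (CM i).1), (\sum_i (CM i).2) => s sM i.
have [C0 [M1 iO]] := CMO i.
have M0 j : 0 <= (CM j).2 by have [_ [M1j _]] := CMO j; apply: le_trans M1j.
have sMi : (CM i).2 < s by apply: le_lt_trans sM; apply: le_sum.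
apply: (le_trans (iO s sMi)); rewrite ler_wpM2r ?invr_ge0 ?exprn_ge0 //.
  by apply/ltW/(le_lt_trans _ sMi)/(le_trans ler01 M1).
by apply: le_sum => j; case: (CMO j).
Qed.

Lemma expRN_taylor1 x : 0 <= x -> `|expR (- x) - (1 - x)| <= x ^+ 2.
Proof.
move=> x0; have lo := expR_ge1Dx (- x).
have up : expR (- x) <= 1 - x + x ^+ 2.
  have ex := expR_ge1Dx x.
  rewrite expRN (le_trans (y := (1 + x)^-1)) ?lef_pV2 ?posrE ?expR_gt0 //; try lra.
  by rewrite -div1r ler_pdivrMr; nra.
by rewrite ler_norml; apply/andP; split; nra.
Qed.

Lemma bigOinv_expR a : 0 <= a ->
  bigOinv 2 (fun s => expR (- a / (2 * s)) - (1 - a / (2 * s))).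
Proof.
move=> a0; exists (a ^+ 2 / 4), 1; split; first by rewrite divr_ge0 ?sqr_ge0.
split=> // s s1; have s0 : 0 < s by lra.
by rewrite mulNr (le_trans (expRN_taylor1 _)) ?divr_ge0 ?mulr_ge0 //; lra.
Qed.

Lemma bigOinv_sum_expR (I : finType) (c a : I -> R) : (forall i, 0 <= a i) ->
  bigOinv 2 (fun s => \sum_i c i * expR (- a i / (2 * s))
                     - (\sum_i c i - (\sum_i c i * a i) / (2 * s))).
Proof.
move=> a0; apply: eq_bigOinv (bigOinv_sum (fun i => bigOinvZ (c i) (bigOinv_expR (a0 i)))).
exists 0 => s _; rewrite mulr_suml -!sumrB; apply: eq_bigr => i _; ring.
Qed.

Lemma bigOinv_ratio_expansion (S P Mi Mj : R -> R) (D W Q : R) :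
  bigOinv 2 (fun s => S s - (1 - D / (2 * s))) ->
  bigOinv 2 (fun s => P s - (W - Q / (2 * s))) ->
  bigOinv 1 Mi -> bigOinv 1 Mj ->
  bigOinv 2 (fun s => P s / S s - Mi s * Mj s / S s ^+ 2 - (W + (D * W - Q) / (2 * s))).
Proof.
pose Y s := S s - (1 - D / (2 * s)); pose X s := P s - (W - Q / (2 * s)).
move=> YO XO MiO MjO.
have epsO : bigOinv 1 (fun s => (2 * s)^-1).
  apply: eq_bigOinv (bigOinvZ 2^-1 (bigOinv_invX 1)).
  by exists 0 => s _; rewrite expr1 invfM.
have /eventually_ge_half S_ge : bigOinv 1 (fun s => S s - 1).
  apply: eq_bigOinv (bigOinvB (bigOinvW (leqnSn 1) YO) (bigOinvZ D epsO)).
  by exists 0 => s _; rewrite /Y; ring.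
have SVO := bigOinvV S_ge.
(* Writing S = 1 - D/(2s) + Y and P = W - Q/(2s) + X, the quantity to bound is
   exactly numO / S - Mi Mj / S^2. *)
have numO : bigOinv 2 (fun s => X s - W * Y s + (2 * s)^-1 * (2 * s)^-1 * (D * (D * W - Q))
                               - (2 * s)^-1 * Y s * (D * W - Q)).
  apply: bigOinvB; first apply: bigOinvD; first apply: bigOinvB.
  - exact: XO.
  - exact: bigOinvZ YO.
  - by rewrite -[2%N]addn0; apply: bigOinvM (bigOinvM epsO epsO) (bigOinv_cst _).
  - by apply: (bigOinvW _ (bigOinvM (bigOinvM epsO YO) (bigOinv_cst _))).
apply: eq_bigOinv (bigOinvB (bigOinvM numO SVO) (bigOinvM (bigOinvM MiO MjO) (bigOinvM SVO SVO))).
have [M SM] := S_ge; exists (Num.max M 0) => s; rewrite gt_max => /andP[/SM Ss s0].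
rewrite /X /Y; field; rewrite ?gt_eqF //; lra.
Qed.
End BigOInv.

Section DirectionalDerivatives.
Variables (R : realType) (V : normedModType R).

Lemma is_derive_lineP (f : V -> R) x v df :
  is_derive x v f df <-> is_derive (0 : R) 1 (fun h : R => f (h *: v + x)) df.
Proof.
have line : 'D_1 (fun h : R => f (h *: v + x)) 0 = 'D_v f x.
  rewrite /derive; set g1 := fun h => h^-1 *: _; set g2 := fun h => h^-1 *: _.
  suff -> : g1 = g2 by [].
  by apply/funext => h; rewrite /g1 /g2 /= addr0 scale0r add0r [_%:A]mulr1.
split=> -[fd fdv].
  by split; [exact: (iffLR (derivable1P _ _ _)) | rewrite line].
by split; [exact: (iffRL (derivable1P _ _ _)) | rewrite -line].
Qed.

Lemma is_derive_comp1 (g : R -> R) (f : V -> R) x v dg df :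
  is_derive x v f df -> is_derive (f x) 1 g dg -> is_derive x v (g \o f) (dg * df).
Proof.
move=> /is_derive_lineP fd gd; apply/is_derive_lineP.
have gd0 : is_derive ((fun h : R => f (h *: v + x)) 0) 1 g dg by rewrite /= scale0r add0r.
exact: (is_derive1_comp gd0 fd).
Qed.

Lemma is_derive_ln (f : V -> R) x v df :
  is_derive x v f df -> 0 < f x -> is_derive x v (fun y => ln (f y)) (df / f x).
Proof.
move=> fd fx0.
by apply: is_derive_eq (is_derive_comp1 fd (is_derive1_ln fx0)) _; rewrite mulrC.
Qed.

Lemma is_derive_inv (f : V -> R) x v df :
  is_derive x v f df -> f x != 0 -> is_derive x v (fun y => (f y)^-1) (- df / f x ^+ 2).
Proof.
move=> fd fx0.
have id_inv := is_deriveV fx0 (is_derive_id (f x) 1).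
apply: is_derive_eq (is_derive_comp1 fd id_inv) _.
by rewrite [_%:A]mulr1 mulrC mulrN mulNr.
Qed.
End DirectionalDerivatives.

Section GaussianDerivatives.
Variables (R : realType) (d : nat).
Implicit Types (v y mu : 'rV[R]_d) (s t : R).

Lemma sqnorm_ge0 v : 0 <= sqnorm v.
Proof. by apply: sumr_ge0 => l _; apply: sqr_ge0. Qed.

Lemma sqnormN v : sqnorm (- v) = sqnorm v.
Proof. by apply: eq_bigr => l _; rewrite mxE sqrrN. Qed.

Lemma sqnorm_shift v i t :
  sqnorm (t *: ebase R i + v) = sqnorm v + 2 * v 0 i * t + t ^+ 2.
Proof.
rewrite /sqnorm -addrA (bigD1 i) //= [in RHS](bigD1 i) //= !mxE eqxx /=.
have -> : \sum_(l < d | l != i) (t *: ebase R i + v) 0 l ^+ 2 =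
          \sum_(l < d | l != i) v 0 l ^+ 2.
  by apply: eq_bigr => l /negbTE li; rewrite !mxE eqxx li mulr0 add0r.
rewrite eqxx mulr1; ring.
Qed.

Lemma is_derive_coord y i j : is_derive y (ebase R j) (fun x => x 0 i) (j == i)%:R.
Proof.
apply/is_derive_lineP; under eq_fun do rewrite !mxE eqxx /=.
by apply: is_derive_eq; rewrite scaler0 add0r addr0 [_%:A]mulr1 eq_sym.
Qed.

Lemma is_derive_gauss y mu s i :
  is_derive y (ebase R i) (fun x => gauss x mu s) (gauss y mu s * (mu - y) 0 i / s).
Proof.
have dq : is_derive y (ebase R i) (fun x => - sqnorm (x - mu) / (2 * s))
                    (- (2 * (y - mu) 0 i) / (2 * s)).
  apply/is_derive_lineP; under eq_fun do rewrite -addrA sqnorm_shift.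
  by apply: is_derive_eq; rewrite /GRing.scale /=; ring.
apply: is_derive_eq
  (is_deriveZ (powR (2 * pi * s) (- d%:R / 2)) (is_derive_comp1 dq (is_derive_expR _))) _.
rewrite /gauss /GRing.scale /= !mxE.
(* For s = 0 both sides vanish, since 0^-1 = 0. *)
have [->|s0] := eqVneq s 0; first by rewrite !(mulr0, invr0).
by field.
Qed.
End GaussianDerivatives.

Section ScoreJacobian.
Variables (R : realType) (d K : nat) (w : 'I_K -> R) (mu : 'I_K -> 'rV[R]_d) (s : R).
Hypotheses (w_gt0 : forall k, 0 < w k) (K_gt0 : (0 < K)%N) (s_gt0 : 0 < s).
Implicit Types (y : 'rV[R]_d).

Definition mixture_moment i y := \sum_(k < K) w k * gauss y (mu k) s * (mu k - y) 0 i.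

Lemma gauss_gt0 y m : 0 < gauss y m s.
Proof. by rewrite mulr_gt0 ?expR_gt0 // powR_gt0 // !mulr_gt0 // pi_gt0. Qed.

Lemma mixture_gt0 y : 0 < mixture w mu s y.
Proof.
case: K w mu w_gt0 K_gt0 => // n w' mu' w'_gt0 _.
rewrite /mixture big_ord_recl; apply: ltr_pwDl; first by rewrite mulr_gt0 ?gauss_gt0.
by rewrite sumr_ge0 // => k _; rewrite mulr_ge0 ?ltW ?gauss_gt0.
Qed.

Lemma is_derive_mixture y i :
  is_derive y (ebase R i) (mixture w mu s) (mixture_moment i y / s).
Proof.
have -> : mixture w mu s = \sum_(k < K) (fun x => w k * gauss x (mu k) s).
  by apply/funext => x; rewrite fct_sumE.
apply: is_derive_eq (is_derive_sum (fun k => is_deriveZ (w k) (is_derive_gauss y (mu k) s i))) _.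
by rewrite /mixture_moment mulr_suml; apply: eq_bigr => k _; rewrite /GRing.scale /=; ring.
Qed.

Lemma is_derive_mixture_moment y i j :
  is_derive y (ebase R j) (mixture_moment i)
    (\sum_(k < K) w k * gauss y (mu k) s * ((mu k - y) 0 i * (mu k - y) 0 j / s - (j == i)%:R)).
Proof.
have -> : mixture_moment i = \sum_(k < K) (fun x => w k * gauss x (mu k) s * (mu k - x) 0 i).
  by apply/funext => x; rewrite fct_sumE.
have dcoord k : is_derive y (ebase R j) (fun x => (mu k - x) 0 i) (- (j == i)%:R).
  have -> : (fun x => (mu k - x) 0 i) = cst (mu k 0 i) - (fun x => x 0 i).
    by apply/funext => x; rewrite !mxE.
  apply: is_derive_eq (is_deriveB (is_derive_cst _ _ _) (is_derive_coord y i j)) _.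
  by rewrite sub0r.
apply: is_derive_eq (is_derive_sum (fun k =>
  is_deriveM (is_deriveZ (w k) (is_derive_gauss y (mu k) s j)) (dcoord k))) _.
apply: eq_bigr => k _.
by rewrite -[(w k \*: _) y]/(w k * gauss y (mu k) s) /GRing.scale /= !mxE; ring.
Qed.

Lemma derive_ln_mixture y i :
  'D_(ebase R i) (fun x => ln (mixture w mu s x)) y
  = mixture_moment i y / (s * mixture w mu s y).
Proof.
have [_ ->] := is_derive_ln (is_derive_mixture y i) (mixture_gt0 y).
by rewrite invfM mulrA.
Qed.

Lemma score_jacobianE y i j : score_jacobian w mu s y i j =
  (\sum_(k < K) w k * gauss y (mu k) s * ((mu k - y) 0 i * (mu k - y) 0 j / s - (i == j)%:R))
    / (s * mixture w mu s y)
  - mixture_moment i y * mixture_moment j y / (s * mixture w mu s y) ^+ 2.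
Proof.
rewrite /score_jacobian /hessian mxE.
under eq_fun do rewrite derive_ln_mixture.
have sp0 : s * mixture w mu s y != 0 by rewrite mulf_neq0 ?gt_eqF ?mixture_gt0.
have [_ ->] := is_deriveM (is_derive_mixture_moment y i j)
  (is_derive_inv (is_deriveZ s (is_derive_mixture y j)) sp0).
rewrite -[(s \*: _) y]/(s * mixture w mu s y) [j == i]eq_sym /GRing.scale /=.
by field; rewrite ?gt_eqF ?mixture_gt0.
Qed.
End ScoreJacobian.

Section AtTheMean.
Variables (R : realType) (d K : nat) (w : 'I_K -> R) (mu : 'I_K -> 'rV[R]_d).
Hypotheses (w_gt0 : forall k, 0 < w k) (w_sum1 : \sum_(k < K) w k = 1).

Definition expsum (s : R) (c : 'I_K -> R) :=
  \sum_(k < K) c k * expR (- sqnorm (nu w mu k) / (2 * s)).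

Lemma K_gt0 : (0 < K)%N.
Proof. by case: K w w_sum1 => // w0; rewrite big_ord0 => /eqP; rewrite eq_sym oner_eq0. Qed.

Lemma score_jacobian_xbar s i j : 0 < s ->
  score_jacobian w mu s (xbar w mu) i j =
  (expsum s (fun k => w k * (nu w mu k 0 i * nu w mu k 0 j)) / expsum s w
   - expsum s (fun k => w k * nu w mu k 0 i) * expsum s (fun k => w k * nu w mu k 0 j)
     / expsum s w ^+ 2) / s ^+ 2
  - (i == j)%:R / s.
Proof.
move=> s_gt0; rewrite score_jacobianE //; last exact: K_gt0.
set c := powR (2 * pi * s) (- d%:R / 2).
have c_gt0 : 0 < c by rewrite powR_gt0 // !mulr_gt0 // pi_gt0.
have gauss_xbar k : gauss (xbar w mu) (mu k) s = c * expR (- sqnorm (nu w mu k) / (2 * s)).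
  by rewrite /gauss -opprB sqnormN.
have mixE : mixture w mu s (xbar w mu) = c * expsum s w.
  by rewrite /mixture mulr_sumr; apply: eq_bigr => k _; rewrite gauss_xbar; ring.
have momE l : mixture_moment w mu s l (xbar w mu) = c * expsum s (fun k => w k * nu w mu k 0 l).
  by rewrite /mixture_moment mulr_sumr; apply: eq_bigr => k _; rewrite gauss_xbar; ring.
have hessE : \sum_(k < K) w k * gauss (xbar w mu) (mu k) s *
      ((mu k - xbar w mu) 0 i * (mu k - xbar w mu) 0 j / s - (i == j)%:R) =
    c * (expsum s (fun k => w k * (nu w mu k 0 i * nu w mu k 0 j)) / s
         - (i == j)%:R * expsum s w).
  rewrite /expsum mulr_suml mulr_sumr -sumrB mulr_sumr; apply: eq_bigr => k _.
  by rewrite gauss_xbar; ring.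
have S_gt0 : 0 < expsum s w.
  by rewrite -(pmulr_rgt0 _ c_gt0) -mixE mixture_gt0 // K_gt0.
rewrite mixE !momE hessE; field.
by rewrite !gt_eqF.
Qed.

Lemma expsum_expansion c : bigOinv 2 (fun s =>
  expsum s c - (\sum_(k < K) c k - (\sum_(k < K) c k * sqnorm (nu w mu k)) / (2 * s))).
Proof. exact: bigOinv_sum_expR (fun k => sqnorm_ge0 _). Qed.

Lemma sum_w_nu l : \sum_(k < K) w k * nu w mu k 0 l = 0.
Proof.
rewrite /nu /xbar; under eq_bigr do rewrite !mxE summxE mulrBr.
rewrite sumrB -mulr_suml w_sum1 mul1r; apply/eqP; rewrite subr_eq0; apply/eqP.
by apply: eq_bigr => k _; rewrite mxE.
Qed.

Lemma WcovE i j : Wcov w mu i j = \sum_(k < K) w k * (nu w mu k 0 i * nu w mu k 0 j).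
Proof. by rewrite summxE; apply: eq_bigr => k _; rewrite !mxE big_ord1 !mxE. Qed.

Lemma QcovE i j :
  Qcov w mu i j = \sum_(k < K) w k * (nu w mu k 0 i * nu w mu k 0 j) * sqnorm (nu w mu k).
Proof. by rewrite summxE; apply: eq_bigr => k _; rewrite !mxE big_ord1 !mxE; ring. Qed.

Definition score_jacobian_expansion (s : R) : 'M[R]_d :=
  (- s^-1) *: 1%:M + (s ^+ 2)^-1 *: Wcov w mu
  + (2 * s ^+ 3)^-1 *: (avg_d2 w mu *: Wcov w mu - Qcov w mu).

Lemma score_jacobian_xbar_expansion i j : bigOinv 4 (fun s =>
  score_jacobian w mu s (xbar w mu) i j - score_jacobian_expansion s i j).
Proof.
have SO := expsum_expansion w; rewrite w_sum1 -/(avg_d2 w mu) in SO.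
have PO := expsum_expansion (fun k => w k * (nu w mu k 0 i * nu w mu k 0 j)).
rewrite -WcovE -QcovE in PO.
have MO l : bigOinv 1 (fun s => expsum s (fun k => w k * nu w mu k 0 l)).
  have := expsum_expansion (fun k => w k * nu w mu k 0 l); rewrite sum_w_nu.
  set Z := \sum_(k < K) _; move/(bigOinvW (leqnSn 1)) => EO.
  apply: eq_bigOinv (bigOinvD EO (bigOinvZ (- Z / 2) (bigOinv_invX R 1))).
  by exists 0 => s s_gt0; field; rewrite gt_eqF.
apply: eq_bigOinv (bigOinvM (bigOinv_invX R 2) (bigOinv_ratio_expansion SO PO (MO i) (MO j))).
exists 0 => s s_gt0; rewrite score_jacobian_xbar // /score_jacobian_expansion !mxE.
by set A := (_ / expsum s w - _ / _); field; rewrite gt_eqF.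
Qed.
End AtTheMean.

Theorem mainTheorem19 (R : realType) (d K : nat)
  (w : 'I_K -> R) (mu : 'I_K -> 'rV[R]_d) :
  (forall k, 0 < w k) -> \sum_(k < K) w k = 1 ->
  exists C M : R, forall s2 : R, M < s2 ->
    forall i j : 'I_d,
      `| score_jacobian w mu s2 (xbar w mu) i j
         - ((- s2^-1) *: (1%:M : 'M[R]_d)
            + (s2 ^+ 2)^-1 *: Wcov w mu
            + (2 * s2 ^+ 3)^-1 *: (avg_d2 w mu *: Wcov w mu - Qcov w mu)) i j |
      <= C / s2 ^+ 4.
Proof.
move=> w_gt0 w_sum1.
have [C [M bound]] := bigOinv_uniform (fun ij : 'I_d * 'I_d =>
  score_jacobian_xbar_expansion mu w_gt0 w_sum1 ij.1 ij.2).
by exists C, M => s sM i j; exact: (bound s sM (i, j)).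
Qed.
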